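(* Let $p$ be a prime, $K\in\{\mathbb Z_{(p)},\mathbb Z_p\}$, $F$ a field containing $K$, $G=\langle a\rangle\cong C_{p^2}$, $\Phi(x)=x^{p-1}+\dots+x+1$, and let $U_0=KC_{p^2}\Phi(a)$ be the submodule of $KC_{p^2}$ generated by $\Phi(a)$. Then for every $1$-cocycle $T:C_{p^2}\to\widehat{U_0}$ the group $\mathrm{Crys}(C_{p^2};U_0;T)$ contains an element of order $p$.
   Context: $FM=F\otimes_KM$, $\widehat M=FM/M$ with $g(x+M)=gx+M$; a $1$-cocycle is $T:G\to\widehat M$ with $T(gh)=gT(h)+T(g)$. $\mathrm{Crys}(G;M;T)=\{(g,x):g\in G,\ x\in FM,\ x+M=T(g)\}$ with $(g,x)(g',x')=(gg',g'x+x')$. *)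

From mathcomp Require Import all_boot all_order all_algebra.
Set Implicit Arguments. Unset Strict Implicit. Unset Printing Implicit Defensive.
Import Order.TTheory GRing.Theory Num.Theory.
Local Open Scope ring_scope.

(* The cyclic group C_{p^2} = <a>, written additively: i : 'Z_(p^2) stands for a^i. *)
Notation Cp2 p := 'Z_(p ^ 2).

(* The group algebra F C_{p^2}: f i is the coefficient of a^i. *)
Definition grpalg (F : fieldType) (p : nat) := {ffun Cp2 p -> F}.

Definition gmul (F : fieldType) (p : nat) (f h : grpalg F p) : grpalg F p :=
  [ffun i => \sum_(j : Cp2 p) f j * h (i - j)].

(* action of the group element a^g : multiplication by a^g *)
Definition gact (F : fieldType) (p : nat) (g : Cp2 p) (f : grpalg F p) : grpalg F p :=
  [ffun i => f (i - g)].

(* Phi(a) = 1 + a + ... + a^(p-1) *)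
Definition Phi (F : fieldType) (p : nat) : grpalg F p :=
  [ffun i : Cp2 p => if (val i < p)%N then 1 else 0].

(* K is (the image in F of) Z_(p), the localization of Z at p; F has char 0 *)
Definition is_Zploc_sub (F : fieldType) (p : nat) (K : F -> Prop) : Prop :=
  [pchar F] =i pred0 /\
  forall x : F, K x <-> exists q : rat, ~~ (p %| absz (denq q))%N /\ x = ratr q.

(* p-adic integers as the inverse limit of Z/p^n Z: compatible residue sequences *)
Definition is_padic (p : nat) (x : nat -> int) : Prop :=
  forall n : nat, (0 <= x n < (p ^ n)%:Z) /\ ((x n.+1) %% (p ^ n)%:Z)%Z = x n.
Definition padd (p : nat) (x y : nat -> int) : nat -> int :=
  fun n => ((x n + y n) %% (p ^ n)%:Z)%Z.
Definition pmul (p : nat) (x y : nat -> int) : nat -> int :=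
  fun n => ((x n * y n) %% (p ^ n)%:Z)%Z.
Definition pone (p : nat) : nat -> int := fun n => (1 %% (p ^ n)%:Z)%Z.

Definition is_Zp_sub (F : fieldType) (p : nat) (K : F -> Prop) : Prop :=
  exists phi : (nat -> int) -> F,
    (forall x y, is_padic p x -> is_padic p y ->
       phi (padd p x y) = phi x + phi y /\ phi (pmul p x y) = phi x * phi y) /\
    phi (pone p) = 1 /\
    (forall x y, is_padic p x -> is_padic p y -> phi x = phi y -> x = y) /\
    (forall z : F, K z <-> exists x, is_padic p x /\ z = phi x).

Definition U0 (F : fieldType) (p : nat) (K : F -> Prop) (x : grpalg F p) : Prop :=
  exists r : grpalg F p, (forall i, K (r i)) /\ x = gmul r (Phi F p).
Definition FU0 (F : fieldType) (p : nat) (x : grpalg F p) : Prop :=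
  exists r : grpalg F p, x = gmul r (Phi F p).

(* A 1-cocycle T : G -> FU_0/U_0, given by a choice of representatives t g in FU_0
   (T g = t g + U_0); cocycle identity T(gh) = g T(h) + T(g) modulo U_0. *)
Definition cocycle_lift (F : fieldType) (p : nat) (K : F -> Prop)
  (t : Cp2 p -> grpalg F p) : Prop :=
  (forall g, FU0 (t g)) /\
  (forall g h, U0 K (t (g + h) - (gact g (t h) + t g))).

(* Crys(G; U_0; T) = {(g, x) : x in FU_0, x + U_0 = T(g)} *)
Definition in_crys (F : fieldType) (p : nat) (K : F -> Prop)
  (t : Cp2 p -> grpalg F p) (c : Cp2 p * grpalg F p) : Prop :=
  FU0 c.2 /\ U0 K (c.2 - t c.1).

(* (g,x)(g',x') = (gg', g'x + x') ; identity is (1,0) = (0,0) additively *)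
Definition crys_mul (F : fieldType) (p : nat) (c d : Cp2 p * grpalg F p)
  : Cp2 p * grpalg F p := (c.1 + d.1, gact d.1 c.2 + d.2).
Definition crys_pow (F : fieldType) (p : nat) (c : Cp2 p * grpalg F p) (n : nat)
  : Cp2 p * grpalg F p := iter n (fun d => crys_mul d c) (0, 0).

From mathcomp Require Import all_boot all_order all_algebra.
From mathcomp Require Import ring zify.
From Stdlib Require Import FunctionalExtensionality.
Set Implicit Arguments. Unset Strict Implicit. Unset Printing Implicit Defensive.
Import Order.TTheory GRing.Theory Num.Theory.
Local Open Scope ring_scope.

(* Let N = 1 + a^p + ... + a^(p(p-1)). Since N Phi(a) is the sum of all group
   elements, N (w Phi(a)) is eps(w) times that sum, eps being the augmentation.
   Choose x = r Phi(a) representing T(a^p); then (a^p, x)^p = (1, N x).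
   Iterating the cocycle identity p times and using a^(p^2) = 1 shows that
   -N x lies in U_0, so its coefficient at 1, which is -eps(r), equals eps(v)
   for some v with coefficients in K. Then x' = (r + v) Phi(a) still represents
   T(a^p) and N x' = 0, so (a^p, x') has order p. *)

Definition add_closed (F : fieldType) (K : F -> Prop) : Prop :=
  K 0 /\ forall x y, K x -> K y -> K (x + y).

Section RatCharZero.
Variable F : fieldType.
Hypothesis F0 : [pchar F] =i pred0.

Lemma pchar0_intr_eq0 (z : int) : ((z%:~R : F) == 0) = (z == 0).
Proof.
have natF0 := (pcharf0P F).1 F0.
case: z => n; first by rewrite -pmulrn natF0.
by rewrite NegzE mulrNz oppr_eq0 -pmulrn natF0.
Qed.

Lemma pchar0_ratrD : {morph @ratr F : x y / x + y}.
Proof.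
have den_neq0 z : ((denq z)%:~R : F) != 0 by rewrite pchar0_intr_eq0 denq_neq0.
have ratrE z : @ratr F z * (denq z)%:~R = (numq z)%:~R by rewrite mulfVK.
move=> x y; apply: (mulIf (den_neq0 (x + y))); apply: (mulIf (den_neq0 x)).
apply: (mulIf (den_neq0 y)).
have numD : numq (x + y) * denq x * denq y
          = (numq x * denq y + numq y * denq x) * denq (x + y).
  by apply: (@intr_inj rat); rewrite !rmorphM !rmorphD !rmorphM /= !numqE; ring.
rewrite ratrE -!rmorphM /= numD !rmorphM rmorphD !rmorphM /= -!ratrE; ring.
Qed.

End RatCharZero.

Lemma denqD_dvd (x y : rat) : (denq (x + y) %| denq x * denq y)%Z.
Proof.
have den_neq0 z : (denq z)%:~R != 0 :> rat by rewrite intr_eq0 denq_neq0.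
have -> : x + y = (numq x * denq y + numq y * denq x)%:~R / (denq x * denq y)%:~R.
  rewrite -{1}[x]divq_num_den -{1}[y]divq_num_den rmorphD !rmorphM /=.
  by field; rewrite !den_neq0.
by case: divqP => [_|k z _]; [exact: dvdz0 | exact: dvdz_mull].
Qed.

Lemma Zploc_add_closed (F : fieldType) (p : nat) (K : F -> Prop) :
  prime p -> is_Zploc_sub p K -> add_closed K.
Proof.
move=> p_pr [F0 KE]; split.
  apply/KE; exists 0; split; last by rewrite /ratr mul0r.
  by rewrite dvdn1 neq_ltn prime_gt1 ?orbT.
move=> _ _ /KE[x [px ->]] /KE[y [py ->]]; apply/KE; exists (x + y).
split; last by rewrite pchar0_ratrD.
have : ~~ (p %| absz (denq x * denq y)%R)%N by rewrite abszM Euclid_dvdM // negb_or px.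
by apply: contra => /dvdn_trans; apply; exact: denqD_dvd.
Qed.

Lemma modz_modMl (m c d : int) : ((m %% (c * d))%Z %% d)%Z = (m %% d)%Z.
Proof. by rewrite [in RHS](divz_eq m (c * d)) mulrA modzMDl. Qed.

Section PAdic.
Variable p : nat.
Hypothesis p_gt0 : (0 < p)%N.

Lemma padic0 : is_padic p (fun _ => 0).
Proof. by move=> n; rewrite mod0z lexx ltz_nat expn_gt0 p_gt0. Qed.

Lemma padic_padd x y : is_padic p x -> is_padic p y -> is_padic p (padd p x y).
Proof.
move=> px py n; have pn_gt0 : (0 < p ^ n)%N by rewrite expn_gt0 p_gt0.
rewrite /padd modz_ge0 ?ltz_pmod ?ltz_nat ?eqz_nat -?lt0n //.
by rewrite expnS PoszM modz_modMl -modzDm (px n).2 (py n).2.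
Qed.

Lemma padd00 : padd p (fun _ => 0) (fun _ => 0) = (fun _ => 0).
Proof. by apply: functional_extensionality => n; rewrite /padd addr0 mod0z. Qed.

End PAdic.

Lemma Zp_add_closed (F : fieldType) (p : nat) (K : F -> Prop) :
  (0 < p)%N -> is_Zp_sub p K -> add_closed K.
Proof.
move=> p_gt0 [phi [phi_hom [_ [_ KE]]]].
have phiD x y px py := (phi_hom x y px py).1.
split.
  apply/KE; exists (fun _ => 0); split; first exact: padic0.
  have := phiD _ _ (padic0 p_gt0) (padic0 p_gt0).
  by rewrite padd00 -{1}[phi _]addr0 => /addrI.
move=> _ _ /KE[x [px ->]] /KE[y [py ->]]; apply/KE; exists (padd p x y).
by rewrite phiD //; split=> //; exact: padic_padd.
Qed.

Section GroupAlgebra.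
Variables (p : nat) (F : fieldType).
Hypothesis p_pr : prime p.
Local Notation G := (Cp2 p).
Local Notation A := (grpalg F p).
Local Notation ap := (p%:R : G).

Lemma p2_gt1 : (1 < p ^ 2)%N.
Proof. by rewrite -[1%N]/(1 ^ 2)%N ltn_exp2r // prime_gt1. Qed.

Lemma val_natZp2 (m : nat) : (m%:R : G) = (m %% p ^ 2)%N :> nat.
Proof. exact: val_Zp_nat p2_gt1 m. Qed.

Lemma val_Zp2_lt (x : G) : (x < p ^ 2)%N.
Proof. by apply: leq_trans (ltn_ord x) _; rewrite Zp_cast ?p2_gt1. Qed.

Lemma Zp2_p_mulrn (k : nat) : ap *+ k = (p * k)%:R.
Proof. by rewrite natrM mulr_natr. Qed.

Lemma Zp2_p_mulrn_p : ap *+ p = 0.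
Proof. by apply: val_inj => /=; rewrite Zp2_p_mulrn val_natZp2 mulnn modnn. Qed.

Lemma Zp2_p_neq0 : ap != 0.
Proof.
apply/eqP => /(congr1 (@nat_of_ord _)); rewrite val_natZp2 modn_small /=.
  by move=> p0; move: (prime_gt0 p_pr); rewrite p0.
by rewrite -{1}[p]expn1 ltn_exp2l ?prime_gt1.
Qed.

Lemma val_sub_p_mulrn_lt (m : G) (k : nat) : (k < p)%N ->
  ((m - ap *+ k)%R < p)%N = (k == m %/ p)%N.
Proof.
move=> lt_kp; rewrite Zp2_p_mulrn.
have p_gt0 := prime_gt0 p_pr.
apply/idP/eqP => [|->].
  have := natr_Zp (m - (p * k)%:R); move: (nat_of_ord _) => d dE lt_dp.
  have -> : m = (d + p * k)%N :> nat.
    rewrite -(subrK (p * k)%:R m) -dE -natrD val_natZp2 modn_small //.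
    by have := mulnn p; nia.
  by rewrite addnC mulnC divnMDl // divn_small // addn0.
have mE : m = (m %/ p * p + m %% p)%N%:R :> G by rewrite -divn_eq natr_Zp.
have lt_mp := ltn_pmod m p_gt0.
rewrite {1}mE natrD mulnC addrAC subrr add0r val_natZp2 modn_small //.
by have := mulnn p; nia.
Qed.

Lemma sum_Phi_sub_p_mulrn (m : G) : \sum_(k < p) Phi F p (m - ap *+ k) = 1.
Proof.
have lt_mp : (m %/ p < p)%N by rewrite ltn_divLR ?prime_gt0 // mulnn val_Zp2_lt.
rewrite (bigD1 (Ordinal lt_mp)) //= ffunE val_sub_p_mulrn_lt // eqxx big1 ?addr0 //.
move=> k /eqP k_neq; rewrite ffunE val_sub_p_mulrn_lt //.
by case: eqP => // kE; case: k_neq; exact: val_inj.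
Qed.

(* shift_sum g n w = (1 + a^g + ... + a^(g(n-1))) w *)
Definition shift_sum (g : G) (n : nat) (w : A) : A :=
  [ffun i => \sum_(k < n) w (i - g *+ k)].

Lemma shift_sum_gmul_Phi (w : A) :
  shift_sum ap p (gmul w (Phi F p)) = [ffun=> \sum_j w j].
Proof.
apply/ffunP => i; rewrite !ffunE.
under eq_bigr => k _ do rewrite ffunE.
rewrite exchange_big /=; apply: eq_bigr => j _.
rewrite -mulr_sumr -[RHS]mulr1 -(sum_Phi_sub_p_mulrn (i - j)); congr (_ * _).
by apply: eq_bigr => k _; rewrite addrAC.
Qed.

Lemma crys_powE (c : G * A) (n : nat) :
  crys_pow c n = (c.1 *+ n, shift_sum c.1 n c.2).
Proof.
elim: n => [|n IHn].
  by congr pair; apply/ffunP => i; rewrite !ffunE big_ord0.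
rewrite [crys_pow _ _]/= -/(crys_pow c n) IHn /crys_mul /= mulrSr; congr pair.
apply/ffunP => i; rewrite !ffunE big_ord_recl /= subr0 addrC; congr (_ + _).
by apply: eq_bigr => k _; rewrite /bump /= add1n mulrS opprD addrA.
Qed.

Lemma gmulDl (u v w : A) : gmul (u + v) w = gmul u w + gmul v w.
Proof.
apply/ffunP => i; rewrite !ffunE -big_split; apply: eq_bigr => j _.
by rewrite ffunE mulrDl.
Qed.

Section U0.
Variable K : F -> Prop.
Hypothesis K0 : K 0.
Hypothesis KD : forall x y, K x -> K y -> K (x + y).

Lemma U0_0 : U0 K (0 : A).
Proof.
exists 0; split=> [i|]; first by rewrite ffunE.
by apply/ffunP => i; rewrite !ffunE big1 // => j _; rewrite ffunE mul0r.
Qed.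

Lemma U0D (x y : A) : U0 K x -> U0 K y -> U0 K (x + y).
Proof.
move=> [r [Kr ->]] [s [Ks ->]]; exists (r + s); rewrite gmulDl.
by split=> // i; rewrite ffunE; apply: KD.
Qed.

Lemma U0_coef (x : A) (i : G) :
  U0 K x -> exists2 v : A, (forall j, K (v j)) & x i = \sum_j v j.
Proof.
case=> r [Kr ->]; exists [ffun j => r j * Phi F p (i - j)] => [j|].
  by rewrite !ffunE; case: ifP; rewrite ?mulr1 ?mulr0.
by rewrite ffunE; under [RHS]eq_bigr do rewrite ffunE.
Qed.

Lemma cocycle_lift_mulrn (t : G -> A) (g : G) (n : nat) :
  cocycle_lift K t -> U0 K (t (g *+ n) - t 0 - shift_sum g n (t g)).
Proof.
case=> _ t_cocycle; elim: n => [|n IHn].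
  have -> : shift_sum g 0 (t g) = 0 by apply/ffunP => i; rewrite !ffunE big_ord0.
  by rewrite subrr subr0; exact: U0_0.
have := U0D IHn (t_cocycle (g *+ n) g); congr (U0 K _).
by apply/ffunP => i; rewrite !ffunE big_ord_recr /= mulrSr; ring.
Qed.

End U0.

End GroupAlgebra.

Theorem lemma11 (p : nat) (F : fieldType) (K : F -> Prop)
  (t : Cp2 p -> grpalg F p) :
  prime p ->
  (is_Zploc_sub p K \/ is_Zp_sub p K) ->
  cocycle_lift K t ->
  exists c : Cp2 p * grpalg F p,
    in_crys K t c /\ crys_pow c p = (0, 0) /\ c <> (0, 0).
Proof.
move=> p_pr K_ring t_lift.
have [K0 KD] : add_closed K.
  by case: K_ring => [/Zploc_add_closed|/Zp_add_closed]; apply=> //; exact: prime_gt0.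
pose ap : Cp2 p := p%:R.
have [r tE] := t_lift.1 ap.
have := cocycle_lift_mulrn K0 KD ap p t_lift.
rewrite Zp2_p_mulrn_p // subrr add0r tE shift_sum_gmul_Phi //.
case/(U0_coef K0 0) => v Kv; rewrite !ffunE => sum_v.
exists (ap, gmul (r + v) (Phi F p)); split; [|split].
- split; first by exists (r + v).
  by exists v; rewrite /= tE gmulDl addrAC subrr add0r.
- rewrite crys_powE /= Zp2_p_mulrn_p // shift_sum_gmul_Phi //; congr pair.
  apply/ffunP => i; under eq_bigr do rewrite ffunE.
  by rewrite !ffunE big_split /= -sum_v subrr.
- by case=> /eqP; rewrite (negbTE (Zp2_p_neq0 p_pr)).
Qed.
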